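(* Let $m\ge 1$ and $n_1,\ldots,n_m\ge 2$. Let $I=(i_1,\ldots,i_m)$ and $J=(j_1,\ldots,j_m)$ be multi-indices with $i_k,j_k\in\{1,\ldots,n_k\}$, and let $c\neq 0$ be a complex scalar (with $c$ real when $I=J$, so that $\mathcal{E}^{IJ}(c)$ is Hermitian). If $I=J$, then $\operatorname{hrank}\mathcal{E}^{IJ}(c)=1$. If $I\neq J$, then $\operatorname{hrank}\mathcal{E}^{IJ}(c)=2d$, where $d$ is the number of indices $k\in\{1,\ldots,m\}$ with $i_k\neq j_k$.
   Context: For positive integers $n_1,\ldots,n_m$, $\mathbb{C}^{[n_1,\ldots,n_m]}$ denotes the real vector space of Hermitian tensors, i.e. tensors $\mathcal{H}\in\mathbb{C}^{n_1\times\cdots\times n_m\times n_1\times\cdots\times n_m}$ with $\mathcal{H}_{i_1\ldots i_m j_1\ldots j_m}=\overline{\mathcal{H}_{j_1\ldots j_m i_1\ldots i_m}}$ for all indices. For vectors $v_i\in\mathbb{C}^{n_i}$, $[v_1,\ldots,v_m]_{\otimes h}:=v_1\otimes\cdots\otimes v_m\otimes\overline{v_1}\otimes\cdots\otimes\overline{v_m}$. Every $\mathcal{H}\in\mathbb{C}^{[n_1,\ldots,n_m]}$ can be written as $\mathcal{H}=\sum_{i=1}^r\lambda_i[u_i^1,\ldots,u_i^m]_{\otimes h}$ with $\lambda_i\in\mathbb{R}$, $u_i^j\in\mathbb{C}^{n_j}$ (a Hermitian decomposition); the Hermitian rank $\operatorname{hrank}(\mathcal{H})$ is the smallest such $r$.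 For multi-indices $I,J$ and a scalar $c$, $\mathcal{E}^{IJ}(c)$ is the Hermitian tensor whose $(i_1,\ldots,i_m,j_1,\ldots,j_m)$ entry equals $c$, whose $(j_1,\ldots,j_m,i_1,\ldots,i_m)$ entry equals $\overline{c}$, and all other entries are zero. *)

From HB Require Import structures.
From mathcomp Require Import all_boot all_order all_algebra.
From mathcomp Require Import complex.
From mathcomp Require Import reals.
Set Implicit Arguments. Unset Strict Implicit. Unset Printing Implicit Defensive.
Import Order.TTheory GRing.Theory Num.Theory.
Local Open Scope ring_scope.

(* Multi-indices (i_1,...,i_m) with i_k in 'I_(n k) (0-based). *)
Definition mindex (m : nat) (n : 'I_m -> nat) :=
  {dffun forall k : 'I_m, 'I_(n k)}.

(* A tensor in C^{n_1 x ... x n_m x n_1 x ... x n_m}: the entry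
   H I J is H_{i_1..i_m j_1..j_m}. *)
Definition tensor (C : Type) (m : nat) (n : 'I_m -> nat) :=
  mindex n -> mindex n -> C.

Definition hermitian_tensor (C : numClosedFieldType) m (n : 'I_m -> nat)
  (H : tensor C n) : Prop :=
  forall I J, H I J = (H J I)^*.

Definition htens (C : numClosedFieldType) m (n : 'I_m -> nat)
  (v : forall k : 'I_m, 'I_(n k) -> C) : tensor C n :=
  fun I J => \prod_(k < m) (v k (I k) * (v k (J k))^*).

Definition has_hdecomp (C : numClosedFieldType) m (n : 'I_m -> nat)
  (H : tensor C n) (r : nat) : Prop :=
  exists (lam : 'I_r -> C) (u : 'I_r -> forall k : 'I_m, 'I_(n k) -> C),
    (forall i, lam i \is Num.real) /\
    forall I J, H I J = \sum_(i < r) lam i * htens (u i) I J.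

Definition hrank_is (C : numClosedFieldType) m (n : 'I_m -> nat)
  (H : tensor C n) (r : nat) : Prop :=
  has_hdecomp H r /\ forall r', has_hdecomp H r' -> (r <= r')%N.

Definition Etensor (C : numClosedFieldType) m (n : 'I_m -> nat)
  (I J : mindex n) (c : C) : tensor C n :=
  fun K L => if (K == I) && (L == J) then c
             else if (K == J) && (L == I) then c^* else 0.

From HB Require Import structures.
From mathcomp Require Import all_boot all_order all_algebra.
From mathcomp Require Import complex reals cyclic separable cyclotomic zify ring.
Set Implicit Arguments. Unset Strict Implicit. Unset Printing Implicit Defensive.
Import Order.TTheory GRing.Theory Num.Theory.
Local Open Scope ring_scope.

(* Upper bound: let z be a primitive 2d-th root of unity and, for t < 2d, let
   u_t^k = e_(I_k) + psi_k z^t e_(J_k) (just e_(I_k) when I_k = J_k), where psi_k = 1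
   except at one coordinate k1 with I_k1 <> J_k1, where psi_k1 = conj c.  The entry
   (K, L) of [u_t]_h vanishes off the cube {I_k, J_k}^m and carries the phase
   (z^(s K - s L))^t, s K counting the coordinates with K_k = J_k <> I_k.  The real
   weights (-1)^t / 2d = z^(d t) / 2d average this phase to the indicator of
   d + s K = s L mod 2d, i.e. of (K, L) in {(I, J), (J, I)}.

   Lower bound: contract a Hermitian decomposition against X(K) conj(Y(L)) with
   product weights X = (x)_k X_k and Y = (x)_k Y_k.  The term lambda_i [u_i]_h
   contributes lambda_i <u_i, X> conj <u_i, Y>, and <u_i, X> is a product over the
   coordinates, so it vanishes as soon as one factor does.  At a coordinate where
   I_k <> J_k one can choose X_k, Y_k supported on {I_k, J_k}, with X_k(I_k) and
   Y_k(J_k) nonzero, killing any two given terms.  With fewer than 2d terms one slot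
   is left over, and it is used to make Y vanish at I.  The contraction of E^IJ(c)
   is then c X(I) conj Y(J) <> 0, while every term contributes 0. *)

Lemma closed_prim_root_exists (C : numClosedFieldType) n :
  (0 < n)%N -> exists z : C, n.-primitive_root z.
Proof.
move=> n_gt0; pose p : {poly C} := 'X^n - 1.
have [r Dp] := closed_field_poly_normal p.
rewrite (monicP _) ?monicXnsubC // scale1r in Dp.
have rn1 : all n.-unity_root r by apply/allP=> z; rewrite -root_prod_XsubC -Dp.
have sz_r : (n < (size r).+1)%N by rewrite -(size_prod_XsubC r id) -Dp size_XnsubC.
have [|z] := hasP (has_prim_root n_gt0 rn1 _ sz_r); last by exists z.
by rewrite -separable_prod_XsubC -Dp separable_Xn_sub_1 // pnatr_eq0 -lt0n.
Qed.

Lemma conjC_unity_root (C : numClosedFieldType) n (z : C) :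
  (0 < n)%N -> z ^+ n = 1 -> z^* = z^-1.
Proof.
move=> n_gt0 zn1; have z1 : `|z| = 1.
  by apply/eqP; rewrite -(pexpr_eq1 (n := n)) -?lt0n // -normrX zn1 normr1.
by rewrite invC_norm z1 expr1n invr1 mul1r.
Qed.

Lemma sum_expr_unity_root (F : fieldType) n (x : F) :
  x ^+ n = 1 -> \sum_(t < n) x ^+ t = if x == 1 then n%:R else 0.
Proof.
move=> xn1; have [->|x_neq1] := eqVneq x 1.
  by under eq_bigr do rewrite expr1n; rewrite sumr_const card_ord.
apply/eqP; have := subrX1 x n; rewrite xn1 subrr => /esym/eqP.
by rewrite mulf_eq0 subr_eq0 (negbTE x_neq1).
Qed.

Lemma eqn_mod_antipodal d a b : (a <= d)%N -> (b <= d)%N ->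
  (d + a == b %[mod 2 * d])%N = ((a == 0) && (b == d)) || ((a == d) && (b == 0)).
Proof.
move=> le_ad le_bd; rewrite eqn_mod_dvd; last by lia.
apply/idP/idP => [/dvdnP[q def_q]|]; last first.
  by case/orP=> /andP[/eqP-> /eqP->]; apply/dvdnP; [exists 0 | exists 1]; lia.
by case: q def_q => [|[|q]]; nia.
Qed.

Lemma bigA_distr_mindex (R : comPzSemiRingType) m (n : 'I_m -> nat)
    (f : forall k : 'I_m, 'I_(n k) -> R) :
  \prod_(k < m) \sum_(a : 'I_(n k)) f k a = \sum_(K : mindex n) \prod_(k < m) f k (K k).
Proof.
pose T_ k := ('I_(n k) : finType).
transitivity (\prod_(k < m) \sum_(j in tagged_with T_ k) untag 0 (f k) j).
  by apply: eq_bigr => k _; rewrite (big_tag f k).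
rewrite bigA_distr_big_dep; pose P_ k := [ffun a : T_ k => f k a].
transitivity (\sum_(t : fprod T_) \prod_(k in 'I_m) P_ k (t k)).
  rewrite big_fprod; apply: eq_bigr => g _; apply: eq_bigr => k _.
  by rewrite /untag; case: eqP => // e; rewrite ffunE.
rewrite (reindex (@dffun_of_fprod _ T_)); last exact/onW_bij/dffun_of_fprod_bij.
by apply: eq_bigr => t _; apply: eq_bigr => k _; rewrite /P_ !ffunE.
Qed.

Section Annihilators.
Variable F : fieldType.

Lemma exists_annihilators2 (a1 a2 b1 b2 : F) :
  exists x1 x2 y1 y2 : F, [/\ x1 != 0, y2 != 0,
    (a1 * x1 + a2 * x2 == 0) || (a1 * y1 + a2 * y2 == 0) &
    (b1 * x1 + b2 * x2 == 0) || (b1 * y1 + b2 * y2 == 0)].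
Proof.
have [a2_0|a2_neq0] := eqVneq a2 0; last have [b1_0|b1_neq0] := eqVneq b1 0.
- have [b2_0|b2_neq0] := eqVneq b2 0.
    exists 1, 0, 0, 1; rewrite a2_0 b2_0 oner_eq0.
    by split=> //; apply/orP; right; apply/eqP; ring.
  exists b2, (- b1), 0, 1; rewrite oner_eq0; split=> //; apply/orP; [right|left]; apply/eqP.
    by rewrite a2_0; ring.
  by ring.
- have [a1_0|a1_neq0] := eqVneq a1 0.
    exists 1, 0, 0, 1; rewrite a1_0 b1_0 oner_eq0.
    by split=> //; apply/orP; left; apply/eqP; ring.
  exists 1, 0, (- a2), a1; rewrite oner_eq0; split=> //; apply/orP; [right|left]; apply/eqP.
    by ring.
  by rewrite b1_0; ring.
- exists a2, (- a1), (- b2), b1; split=> //; apply/orP; [left|right]; apply/eqP; ring.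
Qed.

Definition vdot N (v w : 'I_N -> F) := \sum_i v i * w i.

Definition pair_vec N (p q : 'I_N) (x y : F) : 'I_N -> F :=
  fun i => if i == p then x else if i == q then y else 0.

Lemma vdot_pair_vec N (p q : 'I_N) (v : 'I_N -> F) x y :
  p != q -> vdot v (pair_vec p q x y) = v p * x + v q * y.
Proof.
move=> neq_pq; rewrite /vdot (bigD1 p) //= (bigD1 q) 1?eq_sym //= /pair_vec.
rewrite eqxx eq_sym (negbTE neq_pq) eqxx big1 ?addr0 //.
by move=> i /andP[/negbTE-> /negbTE->]; rewrite mulr0.
Qed.

Lemma exists_annihilators N (p q : 'I_N) (a b : 'I_N -> F) : p != q ->
  exists X Y : 'I_N -> F, [/\ X p != 0, Y q != 0,
    (vdot a X == 0) || (vdot a Y == 0) & (vdot b X == 0) || (vdot b Y == 0)].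
Proof.
move=> neq_pq; have [x1 [x2 [y1 [y2 [x1_neq0 y2_neq0 ka kb]]]]] :=
  exists_annihilators2 (a p) (a q) (b p) (b q).
exists (pair_vec p q x1 x2), (pair_vec p q y1 y2); rewrite !vdot_pair_vec //.
by rewrite /pair_vec eqxx (eq_sym q p) (negbTE neq_pq) eqxx.
Qed.

End Annihilators.

Section Contraction.
Variables (C : numClosedFieldType) (m : nat) (n : 'I_m -> nat).
Implicit Types (I J K L : mindex n) (u X Y : forall k : 'I_m, 'I_(n k) -> C).

Lemma mindex_neqP (K K' : mindex n) : reflect (exists k, K k != K' k) (K != K').
Proof.
apply: (iffP idP) => [neqK|[k neqk]]; last by apply: contraNneq neqk => ->.
apply/existsP; apply: contraNT neqK => /existsPn eqK.
by apply/eqP/ffunP => k; apply/eqP; rewrite -[_ == _]negbK eqK.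
Qed.

Definition mdot u X := \prod_(k < m) vdot (u k) (X k).

Definition hdelta K : forall k : 'I_m, 'I_(n k) -> C := fun k a => (a == K k)%:R.
Arguments hdelta K k a : clear implicits.

Lemma mdot_hdelta K X : mdot (hdelta K) X = \prod_(k < m) X k (K k).
Proof.
apply: eq_bigr => k _; rewrite /vdot /hdelta (bigD1 (K k)) //= eqxx mul1r.
by rewrite big1 ?addr0 // => a /negbTE->; rewrite mul0r.
Qed.

Lemma htens_hdelta K K' L' : htens (hdelta K) K' L' = ((K' == K) && (L' == K))%:R.
Proof.
rewrite /htens /hdelta; under eq_bigr do rewrite conjC_nat -natrM mulnb.
have [->|/mindex_neqP[k neqk]] := eqVneq K' K; last first.
  by rewrite (bigD1 k) //= (negbTE neqk) mul0r.
have [->|/mindex_neqP[k neqk]] := eqVneq L' K; last first.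
  by rewrite (bigD1 k) //= (negbTE neqk) andbF mul0r.
by rewrite big1 // => k _; rewrite !eqxx.
Qed.

Lemma hrank_Etensor_diag I (c : C) : c != 0 -> c \is Num.real ->
  hrank_is (Etensor I I c) 1.
Proof.
move=> c_neq0 c_real; split.
  exists (fun _ => c), (fun _ => hdelta I); split=> // K L.
  rewrite big_ord1 htens_hdelta /Etensor.
  by case: ((K == I) && (L == I)); rewrite ?mulr1 ?mulr0.
move=> [|r] // [lam [u [_ Edec]]].
by move: (Edec I I); rewrite big_ord0 /Etensor !eqxx => /eqP; rewrite (negbTE c_neq0).
Qed.

Lemma hdecomp_contract r (H : tensor C n) (lam : 'I_r -> C) (u : 'I_r -> _) X Y :
  (forall K L, H K L = \sum_(i < r) lam i * htens (u i) K L) ->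
  \sum_K \sum_L H K L * ((\prod_k X k (K k)) * (\prod_k Y k (L k))^*) =
  \sum_(i < r) lam i * (mdot (u i) X * (mdot (u i) Y)^*).
Proof.
move=> Hdec; transitivity (\sum_K \sum_L \sum_(i < r) lam i *
    (htens (u i) K L * ((\prod_k X k (K k)) * (\prod_k Y k (L k))^*))).
  apply: eq_bigr => K _; apply: eq_bigr => L _; rewrite Hdec big_distrl.
  by apply: eq_bigr => i _; rewrite mulrA.
under eq_bigr do rewrite exchange_big; rewrite exchange_big; apply: eq_bigr => i _.
rewrite /mdot /vdot !bigA_distr_mindex rmorph_sum big_distrlr big_distrr.
apply: eq_bigr => K _; rewrite big_distrr; apply: eq_bigr => L _ /=.
by rewrite /htens !big_split /= rmorphM !rmorph_prod mulrACA.
Qed.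

Lemma Etensor_contract I J c (w : mindex n -> mindex n -> C) : I != J ->
  \sum_K \sum_L Etensor I J c K L * w K L = c * w I J + c^* * w J I.
Proof.
move=> neq_IJ; rewrite (bigD1 I) // (bigD1 J) 1?eq_sym //=.
rewrite [X in _ + (_ + X)]big1 ?addr0; last first.
  move=> K /andP[/negbTE neq_KI /negbTE neq_KJ].
  by rewrite big1 // => L _; rewrite /Etensor neq_KI neq_KJ mul0r.
congr (_ + _).
  rewrite (bigD1 J) //= big1 ?addr0 /Etensor ?eqxx // => L /negbTE neq_LJ.
  by rewrite neq_LJ (negbTE neq_IJ) mul0r.
rewrite (bigD1 I) //= big1 ?addr0 /Etensor ?eqxx ?(eq_sym J) ?(negbTE neq_IJ) //.
by move=> L /negbTE neq_LI; rewrite neq_LI mul0r.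
Qed.

Lemma exists_mdot_annihilators I J (u : nat -> forall k : 'I_m, 'I_(n k) -> C) :
  exists X Y, [/\ \prod_k X k (I k) != 0, \prod_k Y k (J k) != 0 &
    forall t, (t < 2 * #|[set k | I k != J k]|)%N ->
      (mdot (u t) X == 0) || (mdot (u t) Y == 0)].
Proof.
set D := [set k | I k != J k]; set es := enum D.
(* Terms [2p] and [2p+1] are killed at the [p]-th coordinate where [I] and [J] differ. *)
have coord k : exists XY : ('I_(n k) -> C) * ('I_(n k) -> C),
    [/\ XY.1 (I k) != 0, XY.2 (J k) != 0 & k \in D -> forall t, t./2 = index k es ->
      (vdot (u t k) XY.1 == 0) || (vdot (u t k) XY.2 == 0)].
  have [kD|kND] := boolP (k \in D); last first.
    exists (hdelta I k, hdelta I k).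
    by move: kND; rewrite inE negbK => /eqP <-; rewrite /hdelta /= eqxx oner_eq0.
  have neq_IJk : I k != J k by rewrite inE in kD.
  have [X [Y [XI YJ killa killb]]] := exists_annihilators
    (u (index k es).*2 k) (u (index k es).*2.+1 k) neq_IJk.
  exists (X, Y); split=> // _ t t_half.
  by have := odd_double_half t; rewrite t_half; case: (odd t) => <-.
have [XY XY_spec] := fin_all_exists coord.
exists (fun k => (XY k).1), (fun k => (XY k).2); split.
- by apply/prodf_neq0 => k _; have [] := XY_spec k.
- by apply/prodf_neq0 => k _; have [] := XY_spec k.
move=> t t_lt.
have half_lt : (t./2 < size es)%N by rewrite -cardE ltn_half_double -mul2n.
have /set0Pn[k0 _] : D != set0 by rewrite -card_gt0; case: #|D| t_lt.
set k := nth k0 es t./2; have kD : k \in D by rewrite -mem_enum mem_nth.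
have mdot0 X : vdot (u t k) (X k) = 0 -> mdot (u t) X = 0.
  by move=> vdot0; rewrite /mdot (bigD1 k) //= vdot0 mul0r.
have [_ _ /(_ kD t)] := XY_spec k; rewrite index_uniq ?enum_uniq //.
move/(_ erefl)/orP => [] /eqP vdot0.
  by rewrite (mdot0 (fun k => (XY k).1)) ?eqxx.
by rewrite (mdot0 (fun k => (XY k).2)) ?eqxx ?orbT.
Qed.

Lemma hdecomp_Etensor_ge I J (c : C) r : I != J -> c != 0 ->
  has_hdecomp (Etensor I J c) r -> (2 * #|[set k | I k != J k]| <= r)%N.
Proof.
move=> neq_IJ c_neq0 [lam [u [_ Edec]]]; rewrite leqNgt; apply/negP => r_lt.
(* The unused slot [2d - 1] is filled with [hdelta I]; as [X] does not vanish at [I],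
   this forces [Y] to vanish there, which kills the [(J, I)] entry of the weight. *)
pose v t := if insub t is Some i then u i else hdelta I.
have [X [Y [XI_neq0 YJ_neq0 v_killed]]] := exists_mdot_annihilators I J v.
set d := #|_| in r_lt v_killed.
have YI0 : \prod_k Y k (I k) = 0.
  have vlast : v (2 * d).-1 = hdelta I by rewrite /v insubN // -leqNgt; lia.
  have /v_killed : ((2 * d).-1 < 2 * d)%N by lia.
  by rewrite vlast !mdot_hdelta (negbTE XI_neq0) => /eqP.
have := Etensor_contract c (fun K L => (\prod_k X k (K k)) * (\prod_k Y k (L k))^*) neq_IJ.
rewrite (hdecomp_contract X Y Edec) YI0 rmorph0 !mulr0 addr0 big1 => [/esym/eqP|i _].
  by rewrite !mulf_eq0 conjC_eq0 (negbTE c_neq0) (negbTE XI_neq0) (negbTE YJ_neq0).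
have /v_killed : (i < 2 * d)%N by apply: ltn_trans r_lt.
by rewrite /v valK => /orP[] /eqP->; rewrite ?rmorph0 ?mulr0 ?mul0r ?mulr0.
Qed.

End Contraction.

Section UpperBound.
Variables (C : numClosedFieldType) (m : nat) (n : 'I_m -> nat).
Variables (I J : mindex n) (c : C) (k1 : 'I_m) (z : C).
Hypothesis neq_IJk1 : I k1 != J k1.
Let D := [set k | I k != J k].
Let d := #|D|.
Hypothesis z_prim : (2 * d).-primitive_root z.
Implicit Types (K L : mindex n).

Let d_gt0 : (0 < d)%N.
Proof. by apply/card_gt0P; exists k1; rewrite inE. Qed.

Let z_neq0 : z != 0.
Proof.
apply: contraTneq (introT eqP (prim_expr_order z_prim)) => ->.
by rewrite expr0n muln_eq0 (gtn_eqF d_gt0) eq_sym oner_eq0.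
Qed.

Let conjC_z : z^* = z^-1.
Proof.
apply: (@conjC_unity_root _ (2 * d)); last exact: prim_expr_order.
by rewrite muln_gt0 d_gt0.
Qed.

Let z_half : z ^+ d = -1.
Proof.
have : (z ^+ d) ^+ 2 == 1 by rewrite -exprM mulnC prim_expr_order.
rewrite sqrf_eq1 -(prim_order_dvd z_prim) => /orP[|/eqP //].
by move/dvdn_leq => /(_ d_gt0); have := d_gt0; lia.
Qed.

Definition hvec (t : nat) : forall k, 'I_(n k) -> C := fun k a =>
  if a == I k then 1 else if a == J k then (if k == k1 then c^* else 1) * z ^+ t else 0.
Arguments hvec t k a : clear implicits.

Let weight K := \prod_k hvec 0 k (K k).
Let shift K := #|[set k in D | K k == J k]|.

Let hvec_prod t K : \prod_k hvec t k (K k) = weight K * (z ^+ t) ^+ shift K.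
Proof.
have hvecE k : hvec t k (K k) =
    hvec 0 k (K k) * (if k \in [set k in D | K k == J k] then z ^+ t else 1).
  rewrite /hvec !inE; case: ifP => [/eqP-> | /negbT neq_KI]; first by rewrite andNb mulr1.
  case: ifP => [/eqP eq_KJ | _]; last by rewrite mul0r.
  by rewrite -eq_KJ (eq_sym (I k)) neq_KI expr0 !mulr1.
by rewrite (eq_bigr _ (fun k _ => hvecE k)) big_split /= -big_mkcond prodr_const.
Qed.

Let htens_hvec t K L :
  htens (hvec t) K L = weight K * (weight L)^* * (z ^+ shift K / z ^+ shift L) ^+ t.
Proof.
rewrite /htens big_split /= -rmorph_prod !hvec_prod rmorphM !rmorphXn /= conjC_z.
by rewrite mulrACA exprMn -!exprVn -!exprM (mulnC t (shift K)) (mulnC t (shift L)).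
Qed.

Let sum_htens_hvec K L :
  \sum_(t < 2 * d) (-1) ^+ t / (2 * d)%:R * htens (hvec t) K L =
  weight K * (weight L)^* *+ (d + shift K == shift L %[mod 2 * d])%N.
Proof.
pose x := z ^+ (d + shift K) / z ^+ shift L.
have termE t : (-1) ^+ t / (2 * d)%:R * htens (hvec t) K L =
    weight K * (weight L)^* / (2 * d)%:R * x ^+ t.
  by rewrite htens_hvec /x exprD z_half mulN1r mulNr [in RHS]exprNn; ring.
have x_unity : x ^+ (2 * d) = 1.
  rewrite /x exprMn exprVn !(exprAC z _ (2 * d)) (prim_expr_order z_prim).
  by rewrite !expr1n invr1 mulr1.
under eq_bigr do rewrite termE; rewrite -mulr_sumr sum_expr_unity_root //.
have zsL_neq0 : z ^+ shift L != 0 by rewrite expf_neq0 ?z_neq0.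
rewrite /x -(inj_eq (mulIf zsL_neq0)) divfK // mul1r (eq_prim_root_expr z_prim).
case: ifP => _; last by rewrite mulr0.
by rewrite divfK // pnatr_eq0 muln_eq0 (gtn_eqF d_gt0).
Qed.

Let shift_le K : (shift K <= d)%N.
Proof. by apply/subset_leq_card/subsetP => k; rewrite inE => /andP[]. Qed.

Let weight_eq0 K k : K k != I k -> K k != J k -> weight K = 0.
Proof.
move=> /negbTE neq_KI /negbTE neq_KJ; apply/eqP/prodf_eq0; exists k => //.
by rewrite /hvec neq_KI neq_KJ.
Qed.

Let weight_shift0 K : weight K *+ (shift K == 0)%N = (K == I)%:R.
Proof.
have [->|/mindex_neqP[k neq_KI]] := eqVneq K I.
  have -> : weight I = 1 by apply: big1 => k _; rewrite /hvec eqxx.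
  suff -> : shift I = 0%N by rewrite eqxx.
  by apply/eqP; rewrite cards_eq0; apply/eqP/setP => k; rewrite !inE andNb.
case: (eqVneq (shift K) 0%N) => [/cards0_eq/setP/(_ k) | _]; last by rewrite mulr0n.
rewrite !inE => /negbT; rewrite negb_and negbK => neq_KJ.
by rewrite (weight_eq0 neq_KI) ?mul0rn //; case/orP: neq_KJ => // /eqP <-.
Qed.

Let weight_shiftd K : weight K *+ (shift K == d) = (K == J)%:R * c^*.
Proof.
have [->|/mindex_neqP[k neq_KJ]] := eqVneq K J.
  have -> : weight J = c^*.
    rewrite /weight (bigD1 k1) //= big1 => [|k /negbTE neq_kk1]; rewrite /hvec.
      by rewrite eq_sym (negbTE neq_IJk1) !eqxx !mulr1.
    by case: ifP => // _; rewrite eqxx neq_kk1 mulr1.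
  suff -> : shift J = d by rewrite !eqxx mulr1n mul1r.
  by apply: eq_card => k; rewrite !inE eqxx andbT.
case: (eqVneq (shift K) d) => [shiftKd | _]; last by rewrite mulr0n mul0r.
have kND : k \notin D.
  apply: contra neq_KJ => kD; have : [set k in D | K k == J k] == D.
    rewrite eqEcard -/(shift K) shiftKd leqnn andbT.
    by apply/subsetP => i; rewrite inE => /andP[].
  by move/eqP/setP/(_ k); rewrite !inE; rewrite inE in kD; rewrite kD => /= ->.
rewrite (weight_eq0 (k := k)) ?mul0rn ?mul0r //.
by move: kND; rewrite inE negbK => /eqP ->.
Qed.

Lemma Etensor_hvec K L :
  Etensor I J c K L = \sum_(t < 2 * d) (-1) ^+ t / (2 * d)%:R * htens (hvec t) K L.
Proof.
have neq_IJ : I != J by apply/mindex_neqP; exists k1.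
have mulrn_split (x y : C) (a0 ad b0 bd : bool) : ~~ (a0 && ad) ->
    x * y^* *+ (a0 && bd || ad && b0) = (x *+ a0) * (y *+ bd)^* + (x *+ ad) * (y *+ b0)^*.
  by case: a0 ad b0 bd => [] [] [] [] //= _;
    rewrite ?mulr0n ?mulr1n ?rmorph0 ?mulr0 ?mul0r ?addr0 ?add0r.
rewrite sum_htens_hvec eqn_mod_antipodal ?shift_le // mulrn_split; last first.
  by apply/negP => /andP[/eqP-> /eqP d0]; move: d_gt0; rewrite -d0.
rewrite !weight_shift0 !weight_shiftd rmorphM /= conjCK !conjC_nat /Etensor.
have [->|neq_KI] := eqVneq K I.
  rewrite (negbTE neq_IJ) /= !mul1r !mul0r addr0.
  by case: (L == J); rewrite ?mul1r ?mul0r.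
rewrite /= !mul0r add0r.
by case: (K == J); case: (L == I); rewrite /= ?mulr1 ?mulr0 ?mul1r ?mul0r.
Qed.

End UpperBound.

Lemma has_hdecomp_Etensor (C : numClosedFieldType) m (n : 'I_m -> nat)
    (I J : mindex n) (c : C) :
  I != J -> has_hdecomp (Etensor I J c) (2 * #|[set k | I k != J k]|).
Proof.
case/mindex_neqP => k1 neq_IJk1.
have N_gt0 : (0 < 2 * #|[set k | I k != J k]|)%N.
  by rewrite muln_gt0 card_gt0; apply/set0Pn; exists k1; rewrite inE.
have [z z_prim] := closed_prim_root_exists C N_gt0.
exists (fun t => (-1) ^+ t / (2 * #|[set k | I k != J k]|)%:R), (hvec I J c k1 z).
split; last exact: Etensor_hvec.
by move=> t; rewrite rpredM ?rpredV ?rpredX ?rpredN ?rpred1 ?realn.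
Qed.

Theorem theorem2p3 (R : realType) (m : nat) (n : 'I_m -> nat)
  (I J : mindex n) (c : R[i]) :
  (1 <= m)%N -> (forall k, (2 <= n k)%N) -> c != 0 ->
  (I = J -> c \is Num.real) ->
  (I = J -> hrank_is (Etensor I J c) 1) /\
  (I != J -> hrank_is (Etensor I J c) (2 * #|[set k | I k != J k]|)).
Proof.
(* The bounds [1 <= m] and [2 <= n k] are implied by [I != J] wherever needed. *)
move=> _ _ c_neq0 c_real; split=> [eq_IJ | neq_IJ].
  by rewrite -eq_IJ; apply: hrank_Etensor_diag c_neq0 (c_real eq_IJ).
split; first exact: has_hdecomp_Etensor.
by move=> r; apply: hdecomp_Etensor_ge.
Qed.
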